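(* For all constants $K_1,K_2,K_3,K_4>0$ there is a constant $K>0$ such that the following holds. Let $\varepsilon\in(0,1]$, let $A$ be a real $n\times n$ matrix, and let $q$ be a number with $K_1\varepsilon^{-2}\le q\le n$. Assume $\|A\|_C\le K_2\,\varepsilon n^2$, $\|A\|_F\le K_3\, n$, and $\max_{i,j}|A_{ij}|\le K_4\,\varepsilon^{-1}$. Let $Q$ be a random subset of $\{1,\dots,n\}$ in which each element is included independently with probability $q/n$. Then $$\mathbb E\,\|A|_{Q\times Q}\|_C\ \le\ K\,\varepsilon q^2.$$
   Context: The cut norm of a matrix $B=(B_{ij})$ is $\|B\|_C=\max_{I,J}\bigl|\sum_{i\in I,j\in J}B_{ij}\bigr|$, the maximum over all subsets $I$ of row indices and $J$ of column indices. $A|_{Q\times Q}=(A_{ij})_{i,j\in Q}$ is the principal submatrix on $Q$ (cut norm $0$ if $Q=\emptyset$). $\|A\|_F$ is the Frobenius norm. *)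

From HB Require Import structures.
From mathcomp Require Import all_boot all_order all_algebra.
From mathcomp Require Import reals.
Set Implicit Arguments. Unset Strict Implicit. Unset Printing Implicit Defensive.
Import Order.TTheory GRing.Theory Num.Theory.
Local Open Scope ring_scope.

Definition cut_norm (R : realType) (m n : nat) (B : 'M[R]_(m, n)) : R :=
  \big[Num.max/0]_(I : {set 'I_m}) \big[Num.max/0]_(J : {set 'I_n})
     `|\sum_(i in I) \sum_(j in J) B i j|.

Definition frob_norm (R : realType) (m n : nat) (B : 'M[R]_(m, n)) : R :=
  Num.sqrt (\sum_(i < m) \sum_(j < n) B i j ^+ 2).

(* Principal submatrix A|_{Q x Q}, indexed by the elements of Q (in increasing order). *)
Definition principal_submx (R : realType) (n : nat) (A : 'M[R]_n) (Q : {set 'I_n})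
  : 'M[R]_#|Q| :=
  \matrix_(i < #|Q|, j < #|Q|) A (enum_val i) (enum_val j).

Definition binom_subset_expect (R : realType) (n : nat) (p : R)
  (f : {set 'I_n} -> R) : R :=
  \sum_(Q : {set 'I_n}) p ^+ #|Q| * (1 - p) ^+ (n - #|Q|) * f Q.

From HB Require Import structures.
From mathcomp Require Import all_boot all_order all_algebra.
From mathcomp Require Import reals ring lra.
Import Order.TTheory GRing.Theory Num.Theory.
Local Open Scope ring_scope.
Set Implicit Arguments. Unset Strict Implicit. Unset Printing Implicit Defensive.

(* The cut norm of A|Q is the largest |block sum| over X :&: Q and Y :&: Q.
   Averaging over a uniformly random bipartition P, where each off-diagonal
   entry lands in P x ~: P with probability 1/4, writes every block sum as its
   diagonal part plus 4 times the expected block sum of the part B of A lying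
   in P x ~: P.  For such B the row sums over Y :&: Q do not depend on the
   rows of Q, so the largest block sum of B|Q splits into p^2 times that of B
   plus two centered terms, sum_i (1_{i in Q} - p) max(row_i, 0) and its
   column analogue.  Symmetrizing them with an independent copy Q' of Q and
   removing max(., 0) by the contraction principle leaves terms E |Z| with
   Z = sum_j (1_{j in Q} - 1_{j in Q'}) b_j; since E Z^2 = 2 p (1 - p)
   sum_j b_j^2, AM-GM bounds them by p sum_j b_j^2 / l + l / 2 for any
   l > 0.  Altogether
   E cut(A|Q) <= p sum_i |A_ii| + 8 (p^2 cut(A) + 2 p^2 |A|_F^2 / l + n p l),
   and p = q / n, l = eps q give the claim. *)

Section NonnegMax.
Variable R : realDomainType.

Definition fmax (T : finType) (f : T -> R) : R := \big[Num.max/0]_(t : T) f t.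

Section OneType.
Variable T : finType.
Implicit Types f g : T -> R.

Lemma fmax_ge0 f : 0 <= fmax f.
Proof. exact: bigmax_ge_id. Qed.

Lemma le_fmax f t : f t <= fmax f.
Proof. exact: le_bigmax. Qed.

Lemma fmax_le f c : 0 <= c -> (forall t, f t <= c) -> fmax f <= c.
Proof. by move=> c0 fc; apply: bigmax_le. Qed.

Lemma eq_fmax f g : f =1 g -> fmax f = fmax g.
Proof. by move=> fg; apply: eq_bigr => t _. Qed.

Lemma le_fmax2 f g : (forall t, f t <= g t) -> fmax f <= fmax g.
Proof. by move=> fg; apply: le_bigmax2 => t _. Qed.

Lemma fmax_convex (lam : R) f g : 0 <= lam <= 1 ->
  fmax (fun t => lam * f t + (1 - lam) * g t) <= lam * fmax f + (1 - lam) * fmax g.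
Proof.
case/andP=> lam0 lam1; have lam1' : 0 <= 1 - lam by rewrite subr_ge0.
apply: fmax_le => [|t]; first by rewrite addr_ge0 ?mulr_ge0 ?fmax_ge0.
by rewrite lerD ?ler_wpM2l ?le_fmax.
Qed.

Lemma fmax_add_le f g c : 0 <= c -> (forall t, f t <= c) -> (forall t, g t <= c) ->
  (forall t t', f t + g t' <= c) -> fmax f + fmax g <= c.
Proof.
move=> c0 fc gc fgc; rewrite -lerBrDr; apply: fmax_le => [|t].
  by rewrite subr_ge0; apply: fmax_le.
rewrite lerBrDr addrC -lerBrDr; apply: fmax_le => [|t']; first by rewrite subr_ge0.
by rewrite lerBrDr addrC.
Qed.

End OneType.

Lemma exchange_fmax (T U : finType) (F : T -> U -> R) :
  fmax (fun t => fmax (F t)) = fmax (fun u => fmax (F^~ u)).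
Proof.
have swap (V W : finType) (G : V -> W -> R) :
    fmax (fun v => fmax (G v)) <= fmax (fun w => fmax (G^~ w)).
  apply: fmax_le => [|v]; first exact: fmax_ge0.
  apply: fmax_le => [|w]; first exact: fmax_ge0.
  exact: le_trans (le_fmax (G^~ w) v) (le_fmax (fun w => fmax (G^~ w)) w).
by apply: le_anti; rewrite !swap.
Qed.

Definition pos_part (x : R) := Num.max x 0.

Lemma pos_partE x : pos_part x = if x < 0 then 0 else x.
Proof. by []. Qed.

Lemma pos_part_ge0 x : 0 <= pos_part x.
Proof. by rewrite pos_partE; case: ltP. Qed.

Lemma le_pos_part x : x <= pos_part x.
Proof. by rewrite pos_partE; case: ltP => // /ltW. Qed.

Lemma pos_part_le_norm x : pos_part x <= `|x|.
Proof. by rewrite pos_partE; case: ltP => [_|/ger0_norm ->//]; exact: normr_ge0. Qed.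

Lemma pos_part0 : pos_part 0 = 0.
Proof. by rewrite pos_partE ltxx. Qed.

Lemma pos_partMn (b : bool) x : pos_part (b%:R * x) = b%:R * pos_part x.
Proof. by case: b; rewrite ?mul1r ?mul0r ?pos_part0. Qed.

(* The contraction principle for the 1-Lipschitz map [pos_part], in the
   two-point form needed for symmetrization. *)
Lemma fmax_pos_part_contraction (T : finType) (a r : T -> R) :
  fmax (fun t => pos_part (a t) + r t) + fmax (fun t => r t - pos_part (a t))
  <= fmax (fun t => a t + r t) + fmax (fun t => r t - a t).
Proof.
have M1 t : a t + r t <= fmax (fun t => a t + r t) by exact: (le_fmax (fun t => _)).
have M2 t : r t - a t <= fmax (fun t => r t - a t) by exact: (le_fmax (fun t => _)).
have M10 := fmax_ge0 (fun t => a t + r t); have M20 := fmax_ge0 (fun t => r t - a t).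
apply: fmax_add_le => [|t|t|t t']; first lra.
- by have := M1 t; have := M2 t; rewrite pos_partE; case: ltP; lra.
- by have := M2 t; have := le_pos_part (a t); lra.
have := M1 t; have := M2 t; have := M1 t'; have := M2 t'.
rewrite !pos_partE; case: (ltP (a t) 0) => ?; case: (ltP (a t') 0) => ?.
all: by case: (ltP (a t) (a t')) => ?; lra.
Qed.

Lemma fmax_subset_sum (I : finType) (v : I -> R) :
  fmax (fun X : {set I} => \sum_i (i \in X)%:R * v i) = \sum_i pos_part (v i).
Proof.
apply: le_anti; apply/andP; split.
  apply: fmax_le => [|X]; first by apply: sumr_ge0 => i _; exact: pos_part_ge0.
  apply: ler_sum => i _; case: (i \in X); rewrite ?mul1r ?mul0r.
    exact: le_pos_part.
  exact: pos_part_ge0.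
apply: le_trans (le_fmax _ [set i | 0 <= v i]).
apply: ler_sum => i _; rewrite inE pos_partE.
by case: ltP => /= [_|]; rewrite ?mul1r ?mul0r.
Qed.

Lemma fmax_sum_indicator_le (T I : finType) (Q : {set I}) (p : R) (v : T -> I -> R) :
  0 <= p ->
  fmax (fun t => \sum_i (i \in Q)%:R * pos_part (v t i))
  <= p * fmax (fun t => \sum_i pos_part (v t i))
     + fmax (fun t => \sum_i ((i \in Q)%:R - p) * pos_part (v t i)).
Proof.
move=> p0; apply: fmax_le => [|t]; first by rewrite addr_ge0 ?mulr_ge0 ?fmax_ge0.
have -> : \sum_i (i \in Q)%:R * pos_part (v t i) =
    p * \sum_i pos_part (v t i) + \sum_i ((i \in Q)%:R - p) * pos_part (v t i).
  by rewrite mulr_sumr -big_split; apply: eq_bigr => i _ /=; ring.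
rewrite lerD ?ler_wpM2l //; first exact: (le_fmax (fun t => \sum_i pos_part (v t i))).
exact: (le_fmax (fun t => \sum_i ((i \in Q)%:R - p) * pos_part (v t i))).
Qed.

(* [L x] and [M x y] are the values of the two sides of [symmetrize_contract_step]
   when the indicators of [k] in [Q] and [Q'] are [x] and [y]. *)
Lemma fmax_symmetrize_contract (T : finType) (A B : T -> R) (p : R) : 0 <= p <= 1 ->
  let L (x : R) := fmax (fun t => (x - p) * pos_part (A t) + B t) in
  let M (x y : R) := fmax (fun t => (x - y) * A t + B t) in
  (p * (p * L 1 + (1 - p) * L 1) + (1 - p) * (p * L 0 + (1 - p) * L 0)
   <= p * (p * M 1 1 + (1 - p) * M 1 0) + (1 - p) * (p * M 0 1 + (1 - p) * M 0 0) : Prop).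
Proof.
case/andP=> p0 p1 L M; have q0 : 0 <= 1 - p by rewrite subr_ge0.
have q1 : 1 - p <= 1 by rewrite lerBlDr lerDl.
have L1 : L 1 <= (1 - p) * fmax (fun t => pos_part (A t) + B t) + (1 - (1 - p)) * fmax B.
  have lam : 0 <= 1 - p <= 1 by rewrite q0 q1.
  by apply: le_trans _ (fmax_convex _ _ lam); apply: le_fmax2 => t; lra.
have L0 : L 0 <= p * fmax (fun t => B t - pos_part (A t)) + (1 - p) * fmax B.
  have lam : 0 <= p <= 1 by rewrite p0 p1.
  by apply: le_trans _ (fmax_convex _ _ lam); apply: le_fmax2 => t; lra.
have M11 : M 1 1 = fmax B by apply: eq_fmax => t; rewrite subrr mul0r add0r.
have M00 : M 0 0 = fmax B by apply: eq_fmax => t; rewrite subrr mul0r add0r.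
have M10 : M 1 0 = fmax (fun t => A t + B t) by apply: eq_fmax => t; rewrite subr0 mul1r.
have M01 : M 0 1 = fmax (fun t => B t - A t).
  by apply: eq_fmax => t; rewrite sub0r mulN1r addrC.
have C := fmax_pos_part_contraction A B.
rewrite M11 M00 M10 M01; set Y := fmax B in L1 L0 *.
set X1 := fmax (fun t => pos_part (A t) + B t) in L1 C.
set X2 := fmax (fun t => B t - pos_part (A t)) in L0 C.
have pq0 : 0 <= p * (1 - p) by rewrite mulr_ge0.
have := ler_wpM2l pq0 C; have := ler_wpM2l p0 L1; have := ler_wpM2l q0 L0.
set Z1 := fmax (fun t => A t + B t); set Z2 := fmax (fun t => B t - A t).
nra.
Qed.

End NonnegMax.

Section BinomialSubsetExpectation.
Context {R : realType} {n : nat} {p : R}.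
Hypotheses (p_ge0 : 0 <= p) (p_le1 : p <= 1).
Implicit Types (f g : {set 'I_n} -> R) (Q : {set 'I_n}) (k : 'I_n).

Local Notation E := (@binom_subset_expect R n p).

Lemma eq_expect f g : f =1 g -> E f = E g.
Proof. by move=> fg; apply: eq_bigr => Q _; rewrite fg. Qed.

Lemma ler_expect f g : (forall Q, f Q <= g Q) -> E f <= E g.
Proof.
move=> fg; apply: ler_sum => Q _; apply: ler_wpM2l (fg Q).
by rewrite mulr_ge0 ?exprn_ge0 ?subr_ge0.
Qed.

Lemma expectD f g : E (fun Q => f Q + g Q) = E f + E g.
Proof. by rewrite -big_split; apply: eq_bigr => Q _; rewrite mulrDr. Qed.

Lemma expectZ c f : E (fun Q => c * f Q) = c * E f.
Proof. by rewrite mulr_sumr; apply: eq_bigr => Q _; rewrite mulrCA. Qed.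

Lemma expect_sum (I : finType) (F : I -> {set 'I_n} -> R) :
  E (fun Q => \sum_i F i Q) = \sum_i E (F i).
Proof. by rewrite exchange_big; apply: eq_bigr => Q _; rewrite mulr_sumr. Qed.

Lemma exchange_expect (p' : R) (F : {set 'I_n} -> {set 'I_n} -> R) :
  E (fun Q => binom_subset_expect p' (F^~ Q)) =
  binom_subset_expect p' (fun P => E (F P)).
Proof.
rewrite /binom_subset_expect; under eq_bigr => Q _ do rewrite mulr_sumr.
rewrite exchange_big; apply: eq_bigr => P _; rewrite mulr_sumr.
by apply: eq_bigr => Q _; rewrite mulrCA.
Qed.

(* The weights are those of the product of [n] Bernoulli([p]) laws. *)
Lemma expect_const c : E (fun=> c) = c.
Proof.
rewrite /binom_subset_expect -mulr_suml.
suff -> : \sum_(Q : {set 'I_n}) p ^+ #|Q| * (1 - p) ^+ (n - #|Q|) =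
          \prod_(i : 'I_n) \sum_(b : bool) (if b then p else 1 - p).
  by rewrite big1 ?mul1r // => i _; rewrite big_bool /= addrC subrK.
rewrite bigA_distr_bigA (reindex (fun Q : {set 'I_n} => [ffun i => i \in Q])).
  apply: eq_bigr => Q _; under eq_bigr => i _ do rewrite ffunE.
  rewrite (bigID (mem Q)) /= (eq_bigr (fun=> p)) => [|i ->//].
  rewrite [X in _ = _ * X](eq_bigr (fun=> 1 - p)) => [|i /negbTE ->//].
  have cardQC : (#|Q| + #|[predC Q]| = n)%N by rewrite cardC card_ord.
  rewrite !prodr_const -[in X in (X - _)%N]cardQC addKn.
  by congr (_ * _ ^+ _); apply: eq_card => i; rewrite !inE.
exists (fun f : {ffun 'I_n -> bool} => [set i | f i]) => f _.
  by apply/setP => i; rewrite inE ffunE.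
by apply/ffunP => i; rewrite ffunE inE.
Qed.

Lemma expect_ge0 f : (forall Q, 0 <= f Q) -> 0 <= E f.
Proof. by move=> f0; rewrite -(expect_const 0); apply: ler_expect. Qed.

Lemma ler_norm_expect f : `|E f| <= E (fun Q => `|f Q|).
Proof.
rewrite ler_norml; apply/andP; split; last by apply: ler_expect => Q; exact: ler_norm.
rewrite -mulN1r -expectZ; apply: ler_expect => Q.
by rewrite mulN1r lerNl -normrN ler_norm.
Qed.

(* For [k \notin Q]: the conditional expectation of [f] given the coordinates of
   the random set other than [k], which are those of [Q]. *)
Definition avg_at k f Q := p * f (k |: Q) + (1 - p) * f Q.

Lemma expect_split k f :
  E f = \sum_(Q : {set 'I_n} | k \notin Q) p ^+ #|Q| * (1 - p) ^+ (n - #|Q|).-1 * avg_at k f Q.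
Proof.
pose tog Q := if k \in Q then Q :\ k else k |: Q.
have togK : involutive tog.
  by move=> Q; rewrite /tog; case: (boolP (k \in Q)) => kQ;
    rewrite !inE eqxx /= ?setD1K ?setU1K.
rewrite /binom_subset_expect (bigID (fun Q => k \in Q)) /=.
rewrite (reindex_inj (can_inj togK)) /= (eq_bigl (fun Q => k \notin Q)) => [|Q]; last first.
  by rewrite /tog; case: (boolP (k \in Q)) => kQ; rewrite !inE eqxx ?kQ.
rewrite -big_split; apply: eq_bigr => Q /negPf kQ; rewrite /tog kQ cardsU1 kQ /= /avg_at.
have : (#|Q| < n)%N by have := max_card (mem (k |: Q)); rewrite card_ord cardsU1 kQ.
rewrite -subn_gt0 add1n subnS => /prednK <-; rewrite !exprS; ring.
Qed.

Lemma ler_expect_split k f g :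
  (forall Q, k \notin Q -> avg_at k f Q <= avg_at k g Q) -> E f <= E g.
Proof.
move=> fg; rewrite !(expect_split k); apply: ler_sum => Q kQ.
by rewrite ler_wpM2l ?fg ?mulr_ge0 ?exprn_ge0 ?subr_ge0.
Qed.

Lemma eq_expect_split k f g :
  (forall Q, k \notin Q -> avg_at k f Q = avg_at k g Q) -> E f = E g.
Proof.
by move=> fg; apply: le_anti; rewrite !(ler_expect_split (k := k)) // => Q /fg ->.
Qed.

Definition ignores (U : Type) k (h : {set 'I_n} -> U) := forall Q, h Q = h (Q :\ k).

Lemma ignoresU1 (U : Type) k (h : {set 'I_n} -> U) Q :
  ignores k h -> k \notin Q -> h (k |: Q) = h Q.
Proof. by move=> hk kQ; rewrite hk setU1K. Qed.

Lemma expect_indicatorM k g : ignores k g -> E (fun Q => (k \in Q)%:R * g Q) = p * E g.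
Proof.
move=> gk; rewrite -expectZ; apply: (eq_expect_split (k := k)) => Q kQ.
by rewrite /avg_at setU11 (negPf kQ) (ignoresU1 gk kQ) /=; ring.
Qed.

Lemma expect_indicatorN k : E (fun Q => (k \notin Q)%:R) = 1 - p.
Proof.
rewrite -[RHS](expect_const (1 - p)); apply: (eq_expect_split (k := k)) => Q kQ.
by rewrite /avg_at setU11 kQ /=; ring.
Qed.

Lemma expect_indicator_pair i j :
  E (fun Q => ((i \in Q) && (j \notin Q))%:R) = (i != j)%:R * (p * (1 - p)).
Proof.
have [<-|ij] := eqVneq i j.
  by rewrite /= mul0r -[RHS](expect_const 0); apply: eq_expect => Q; case: (i \in Q).
rewrite /= mul1r -(expect_indicatorN j) -(@expect_indicatorM i (fun Q => (j \notin Q)%:R)) => [|Q];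
  last by rewrite in_setD1 eq_sym ij.
by apply: eq_expect => Q; rewrite -natrM mulnb.
Qed.

Definition expect2 (F : {set 'I_n} -> {set 'I_n} -> R) := E (fun Q => E (F Q)).
Local Notation E2 := expect2.
Implicit Types F G : {set 'I_n} -> {set 'I_n} -> R.

Lemma eq_expect2 F G : (forall Q Q', F Q Q' = G Q Q') -> E2 F = E2 G.
Proof. by move=> FG; apply: eq_expect => Q; apply: eq_expect => Q'. Qed.

Lemma ler_expect2 F G : (forall Q Q', F Q Q' <= G Q Q') -> E2 F <= E2 G.
Proof. by move=> FG; apply: ler_expect => Q; apply: ler_expect => Q'. Qed.

Lemma expect2D F G : E2 (fun Q Q' => F Q Q' + G Q Q') = E2 F + E2 G.
Proof. by rewrite /expect2 -expectD; apply: eq_expect => Q; rewrite expectD. Qed.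

Lemma expect2Z c F : E2 (fun Q Q' => c * F Q Q') = c * E2 F.
Proof. by rewrite /expect2 -expectZ; apply: eq_expect => Q; rewrite expectZ. Qed.

Lemma expect2_sum (I : finType) (F : I -> {set 'I_n} -> {set 'I_n} -> R) :
  E2 (fun Q Q' => \sum_i F i Q Q') = \sum_i E2 (F i).
Proof. by rewrite /expect2 -expect_sum; apply: eq_expect => Q; rewrite expect_sum. Qed.

Lemma expect2_const c : E2 (fun _ _ => c) = c.
Proof. by rewrite /expect2 !expect_const. Qed.

Lemma ler_expect2_split k F G :
  (forall Q Q', k \notin Q -> k \notin Q' ->
     avg_at k (fun Q0 => avg_at k (F Q0) Q') Q <=
     avg_at k (fun Q0 => avg_at k (G Q0) Q') Q) ->
  E2 F <= E2 G.
Proof.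
move=> FG; apply: (ler_expect_split (k := k)) => Q kQ.
rewrite /avg_at -!expectZ -!expectD; apply: (ler_expect_split (k := k)) => Q' kQ'.
by have := FG Q Q' kQ kQ'; rewrite /avg_at; lra.
Qed.

Lemma eq_expect2_split k F G :
  (forall Q Q', k \notin Q -> k \notin Q' ->
     avg_at k (fun Q0 => avg_at k (F Q0) Q') Q =
     avg_at k (fun Q0 => avg_at k (G Q0) Q') Q) ->
  E2 F = E2 G.
Proof.
move=> FG; apply: le_anti.
by rewrite !(ler_expect2_split (k := k)) // => Q Q' kQ kQ'; rewrite FG.
Qed.

Lemma expect2_indicatorM k F : (forall Q', ignores k (F^~ Q')) ->
  E2 (fun Q Q' => (k \in Q)%:R * F Q Q') = p * E2 F.
Proof.
move=> Fk; rewrite /expect2 -(@expect_indicatorM k (fun Q => E (F Q))) => [|Q]; last first.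
  by apply: eq_expect => Q'; apply: Fk.
by apply: eq_expect => Q; rewrite expectZ.
Qed.

Lemma expect2_cross i j :
  E2 (fun Q Q' => ((i \in Q)%:R - (i \in Q')%:R) * ((j \in Q)%:R - (j \in Q')%:R))
  = (i == j)%:R * (2 * p * (1 - p)).
Proof.
rewrite -[RHS]expect2_const; apply: (eq_expect2_split (k := i)) => Q Q' iQ iQ'.
rewrite /avg_at !setU11 (negPf iQ) (negPf iQ').
have [<-|ij] := eqVneq i j; first by rewrite !setU11 (negPf iQ) (negPf iQ') /=; ring.
by rewrite !in_setU1 ![j == i]eq_sym (negPf ij) /=; ring.
Qed.

Lemma expect2_sqr (b : 'I_n -> R) :
  E2 (fun Q Q' => (\sum_j ((j \in Q)%:R - (j \in Q')%:R) * b j) ^+ 2)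
  = 2 * p * (1 - p) * \sum_j b j ^+ 2.
Proof.
pose d Q Q' j : R := (j \in Q)%:R - (j \in Q')%:R.
rewrite (eq_expect2 (G := fun Q Q' => \sum_j \sum_k b j * b k * (d Q Q' j * d Q Q' k))).
  rewrite expect2_sum mulr_sumr; apply: eq_bigr => j _.
  rewrite expect2_sum; under eq_bigr => k _ do rewrite expect2Z expect2_cross.
  rewrite (bigD1 j) //= eqxx big1 => [|k kj]; last by rewrite eq_sym (negPf kj) mul0r mulr0.
  by rewrite addr0 /=; ring.
move=> Q Q'; rewrite expr2 big_distrl; apply: eq_bigr => j _.
by rewrite big_distrr; apply: eq_bigr => k _; rewrite /d /=; ring.
Qed.

Lemma norm_le_amgm (x l : R) : 0 < l -> `|x| <= x ^+ 2 / (2 * l) + l / 2.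
Proof.
move=> l0; rewrite -subr_ge0.
have -> : x ^+ 2 / (2 * l) + l / 2 - `|x| = (`|x| - l) ^+ 2 / (2 * l).
  by rewrite -[x ^+ 2]real_normK ?num_real //; field; rewrite gt_eqF.
by rewrite divr_ge0 ?sqr_ge0 ?mulr_ge0 ?ltW.
Qed.

Lemma expect2_norm_le (b : 'I_n -> R) l : 0 < l ->
  E2 (fun Q Q' => `|\sum_j ((j \in Q)%:R - (j \in Q')%:R) * b j|)
  <= p * (\sum_j b j ^+ 2) / l + l / 2.
Proof.
move=> l0; apply: le_trans (ler_expect2 (fun Q Q' => norm_le_amgm _ l0)) _.
rewrite expect2D expect2_const lerD2r.
under eq_expect2 => Q Q' do rewrite mulrC.
rewrite expect2Z expect2_sqr mulrC -subr_ge0.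
have -> : p * (\sum_j b j ^+ 2) / l - 2 * p * (1 - p) * (\sum_j b j ^+ 2) / (2 * l)
          = p * p * (\sum_j b j ^+ 2) / l by field; rewrite gt_eqF.
by rewrite !mulr_ge0 ?invr_ge0 ?(ltW l0) ?sumr_ge0 // => j _; exact: sqr_ge0.
Qed.

End BinomialSubsetExpectation.

Lemma setU1D1 (T : finType) (x : T) (A : {set T}) : (x |: A) :\ x = A :\ x.
Proof. by apply/setP => y; rewrite !inE; case: eqP. Qed.

Section Symmetrization.
Context {R : realType} {n : nat} {p : R}.
Hypotheses (p_ge0 : 0 <= p) (p_le1 : p <= 1).
Local Notation E := (@binom_subset_expect R n p).
Local Notation E2 := (@expect2 R n p).

Lemma symmetrize_contract_step (T : finType) (k : 'I_n)
    (a : T -> {set 'I_n} -> R) (r : T -> {set 'I_n} -> {set 'I_n} -> R) :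
  E2 (fun Q Q' => fmax (fun t =>
        ((k \in Q)%:R - p) * pos_part (a t (Q :\ k)) + r t (Q :\ k) (Q' :\ k)))
  <= E2 (fun Q Q' => fmax (fun t =>
        ((k \in Q)%:R - (k \in Q')%:R) * a t (Q :\ k) + r t (Q :\ k) (Q' :\ k))).
Proof.
apply: (ler_expect2_split p_ge0 p_le1 (k := k)) => Q Q' kQ kQ'.
rewrite /avg_at !setU11 (negPf kQ) (negPf kQ') !setU1D1.
by apply: fmax_symmetrize_contract; rewrite p_ge0 p_le1.
Qed.

Section Hybrid.
Variables (T : finType) (P : {set 'I_n}) (a : 'I_n -> T -> {set 'I_n} -> R).
Hypothesis a_out : forall k t Q, k \notin P -> a k t Q = 0.
Hypothesis a_ignores : forall k i t, k \in P -> ignores k (a i t).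

(* The coordinates [i < m] are symmetrized, the others are not yet. *)
Definition hybrid_term (m : nat) (i : 'I_n) (t : T) (Q Q' : {set 'I_n}) :=
  if (i < m)%N then ((i \in Q)%:R - (i \in Q')%:R) * a i t Q
  else ((i \in Q)%:R - p) * pos_part (a i t Q).

Definition hybrid m Q Q' := fmax (fun t => \sum_i hybrid_term m i t Q Q').

Lemma hybrid_step m : (m < n)%N -> E2 (hybrid m) <= E2 (hybrid m.+1).
Proof.
move=> mn; pose k := Ordinal mn.
pose rest t Q Q' := \sum_(i | i != k) hybrid_term m i t Q Q'.
have hybridE m' : m' \in [:: m; m.+1] -> forall Q Q',
    hybrid m' Q Q' = fmax (fun t => hybrid_term m' k t Q Q' + rest t Q Q').
  move=> m'm Q Q'; apply: eq_fmax => t; rewrite (bigD1 k) //=; congr (_ + _).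
  apply: eq_bigr => i ik; move: m'm; rewrite !inE => /orP[] /eqP -> //.
  rewrite /hybrid_term ltnS leq_eqVlt.
  suff /negPf -> : nat_of_ord i != m by [].
  by apply: contra ik => /eqP im; apply/eqP/val_inj.
rewrite (eq_expect2 (hybridE m (mem_head _ _))).
have m1m : m.+1 \in [:: m; m.+1] by rewrite !inE eqxx orbT.
rewrite (eq_expect2 (hybridE m.+1 m1m)).
rewrite /hybrid_term ltnn ltnSn.
have [kP|kP] := boolP (k \in P); last first.
  apply: (ler_expect2 p_ge0 p_le1) => Q Q'; apply: le_fmax2 => t.
  by rewrite !a_out // pos_part0 !mulr0.
have rest_ignores t Q Q' : rest t Q Q' = rest t (Q :\ k) (Q' :\ k).
  apply: eq_bigr => i ik; rewrite /hybrid_term !in_setD1 ik /=.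
  by rewrite -(a_ignores i t kP).
rewrite (eq_expect2 (G := fun Q Q' => fmax (fun t => ((k \in Q)%:R - p) *
   pos_part (a k t (Q :\ k)) + rest t (Q :\ k) (Q' :\ k)))); last first.
  by move=> Q Q'; apply: eq_fmax => t; rewrite -rest_ignores -(a_ignores k t kP).
rewrite [X in _ <= X](eq_expect2 (G := fun Q Q' => fmax (fun t =>
   ((k \in Q)%:R - (k \in Q')%:R) * a k t (Q :\ k) + rest t (Q :\ k) (Q' :\ k))));
  last first.
  by move=> Q Q'; apply: eq_fmax => t; rewrite -rest_ignores -(a_ignores k t kP).
exact: symmetrize_contract_step.
Qed.

Lemma symmetrize_contract :
  E (fun Q => fmax (fun t => \sum_i ((i \in Q)%:R - p) * pos_part (a i t Q)))
  <= E2 (fun Q Q' => fmax (fun t => \sum_i ((i \in Q)%:R - (i \in Q')%:R) * a i t Q)).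
Proof.
have -> : E (fun Q => fmax (fun t => \sum_i ((i \in Q)%:R - p) * pos_part (a i t Q)))
          = E2 (hybrid 0).
  apply: eq_expect => Q; rewrite -[LHS](expect_const (n := n) (p := p)).
  by apply: eq_expect => Q'; apply: eq_fmax => t; apply: eq_bigr => i _.
have -> : E2 (fun Q Q' => fmax (fun t => \sum_i ((i \in Q)%:R - (i \in Q')%:R) * a i t Q))
          = E2 (hybrid n).
  apply: eq_expect2 => Q Q'; apply: eq_fmax => t.
  by apply: eq_bigr => i _; rewrite /hybrid_term ltn_ord.
suff chain m : (m <= n)%N -> E2 (hybrid 0) <= E2 (hybrid m) by exact: chain.
elim: m => [//|m IH] mn; exact: le_trans (IH (ltnW mn)) (hybrid_step mn).
Qed.

End Hybrid.
End Symmetrization.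

Section CutSums.
Context {R : realType} {n : nat}.
Implicit Types (B : 'M[R]_n) (X Y Q : {set 'I_n}).

Definition cut_sum B X Y := \sum_i \sum_j (i \in X)%:R * B i j * (j \in Y)%:R.
Definition row_sum B Y i := \sum_j B i j * (j \in Y)%:R.
Definition col_sum B X j := \sum_i (i \in X)%:R * B i j.

Definition cut_max B Q := fmax (fun X => fmax (fun Y => cut_sum B (X :&: Q) (Y :&: Q))).

Lemma indicatorI (i : 'I_n) X Y : (i \in X :&: Y)%:R = (i \in X)%:R * (i \in Y)%:R :> R.
Proof. by rewrite in_setI -mulnb natrM. Qed.

Lemma cut_sumE B X Y : cut_sum B X Y = \sum_(i in X) \sum_(j in Y) B i j.
Proof.
rewrite big_mkcond; apply: eq_bigr => i _; case: (i \in X) => /=.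
  rewrite [RHS]big_mkcond; apply: eq_bigr => j _.
  by case: (j \in Y); rewrite /= ?mul1r ?mulr1 ?mulr0.
by rewrite big1 // => j _; rewrite !mul0r.
Qed.

Lemma norm_cut_sum_le B X Y : `|cut_sum B X Y| <= cut_norm B.
Proof.
rewrite cut_sumE; apply: le_trans (le_fmax (fun X => fmax (fun Y => _)) X).
exact: (le_fmax (fun Y => `|\sum_(i in X) \sum_(j in Y) B i j|)).
Qed.

Lemma cut_sumN B X Y : cut_sum (- B) X Y = - cut_sum B X Y.
Proof.
rewrite /cut_sum -sumrN; apply: eq_bigr => i _; rewrite -sumrN.
by apply: eq_bigr => j _; rewrite mxE; ring.
Qed.

Lemma cut_sum_rows B X Y : cut_sum B X Y = \sum_i (i \in X)%:R * row_sum B Y i.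
Proof. by apply: eq_bigr => i _; rewrite mulr_sumr; apply: eq_bigr => j _; ring. Qed.

Lemma cut_sum_cols B X Y : cut_sum B X Y = \sum_j (j \in Y)%:R * col_sum B X j.
Proof.
rewrite /cut_sum exchange_big; apply: eq_bigr => j _; rewrite mulr_sumr.
by apply: eq_bigr => i _; ring.
Qed.

Lemma fmax_cut_sum_rows B Y Q :
  fmax (fun X => cut_sum B (X :&: Q) Y) = \sum_i (i \in Q)%:R * pos_part (row_sum B Y i).
Proof.
rewrite -(eq_bigr _ (fun i _ => pos_partMn _ _)) -fmax_subset_sum.
by apply: eq_fmax => X; rewrite cut_sum_rows; apply: eq_bigr => i _; rewrite indicatorI mulrA.
Qed.

Lemma fmax_cut_sum_cols B X Q :
  fmax (fun Y => cut_sum B X (Y :&: Q)) = \sum_j (j \in Q)%:R * pos_part (col_sum B X j).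
Proof.
rewrite -(eq_bigr _ (fun i _ => pos_partMn _ _)) -fmax_subset_sum.
by apply: eq_fmax => Y; rewrite cut_sum_cols; apply: eq_bigr => j _; rewrite indicatorI mulrA.
Qed.

Lemma frob_norm_sqr B : frob_norm B ^+ 2 = \sum_i \sum_j B i j ^+ 2.
Proof.
by rewrite sqr_sqrtr // sumr_ge0 // => i _; rewrite sumr_ge0 // => j _; exact: sqr_ge0.
Qed.

Lemma cut_max_rows B Q :
  cut_max B Q = fmax (fun Y => \sum_i (i \in Q)%:R * pos_part (row_sum B (Y :&: Q) i)).
Proof. by rewrite /cut_max exchange_fmax; apply: eq_fmax => Y; exact: fmax_cut_sum_rows. Qed.

Lemma fmax_rows_cols B Q :
  fmax (fun Y => \sum_i pos_part (row_sum B (Y :&: Q) i))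
  = fmax (fun X => \sum_j (j \in Q)%:R * pos_part (col_sum B X j)).
Proof.
under eq_fmax => Y do rewrite -fmax_subset_sum -(eq_fmax (fun X => cut_sum_rows B X _)).
by rewrite exchange_fmax; apply: eq_fmax => X; exact: fmax_cut_sum_cols.
Qed.

Lemma cut_max_setT B : cut_max B setT = fmax (fun X => \sum_j pos_part (col_sum B X j)).
Proof.
apply: eq_fmax => X; rewrite setIT -fmax_subset_sum.
by apply: eq_fmax => Y; rewrite setIT cut_sum_cols.
Qed.

End CutSums.

Section RandomCutMax.
Context {R : realType} {n : nat} {p : R}.
Hypotheses (p_ge0 : 0 <= p) (p_le1 : p <= 1).
Local Notation E := (@binom_subset_expect R n p).
Local Notation E2 := (@expect2 R n p).
Variable B : 'M[R]_n.

Lemma expect_centered_cols_le l : 0 < l ->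
  E (fun Q => fmax (fun X => \sum_j ((j \in Q)%:R - p) * pos_part (col_sum B X j)))
  <= p * frob_norm B ^+ 2 / l + n%:R * l / 2.
Proof.
move=> l0.
apply: le_trans (symmetrize_contract p_ge0 p_le1 (P := setT)
  (a := fun j X (_ : {set 'I_n}) => col_sum B X j) _ _) _ => [k X Q|//|].
  by rewrite in_setT.
pose drow (Q Q' : {set 'I_n}) i := \sum_j ((j \in Q)%:R - (j \in Q')%:R) * B i j.
have pointwise (Q Q' : {set 'I_n}) :
    fmax (fun X : {set 'I_n} => \sum_j ((j \in Q)%:R - (j \in Q')%:R) * col_sum B X j)
    <= \sum_i `|drow Q Q' i|.
  rewrite (eq_fmax (g := fun X : {set 'I_n} => \sum_i (i \in X)%:R * drow Q Q' i)) => [|X].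
    by rewrite fmax_subset_sum; apply: ler_sum => i _; exact: pos_part_le_norm.
  rewrite /col_sum /drow; under eq_bigr => j _ do rewrite mulr_sumr.
  rewrite exchange_big; apply: eq_bigr => i _; rewrite mulr_sumr.
  by apply: eq_bigr => j _; ring.
apply: le_trans (ler_expect2 p_ge0 p_le1 pointwise) _.
rewrite expect2_sum.
apply: le_trans (ler_sum _ (fun i _ => expect2_norm_le p_ge0 p_le1 (B i) l0)) _.
rewrite big_split /= sumr_const card_ord frob_norm_sqr -mulr_suml -mulr_sumr.
by rewrite -[_ *+ n]mulr_natl mulrA.
Qed.

Section Bipartite.
Variable P : {set 'I_n}.
Hypothesis B_cross : forall i j, ~~ ((i \in P) && (j \notin P)) -> B i j = 0.

(* The row sums over [Y :&: Q] ignore the coordinates of [Q] in [P], which are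
   the only rows of [B] that can be nonzero. *)
Lemma expect_centered_rows_le l : 0 < l ->
  E (fun Q => fmax (fun Y => \sum_i ((i \in Q)%:R - p) * pos_part (row_sum B (Y :&: Q) i)))
  <= p * p * frob_norm B ^+ 2 / l + n%:R * p * l / 2.
Proof.
move=> l0.
apply: le_trans (symmetrize_contract p_ge0 p_le1 (P := P)
  (a := fun i Y Q => row_sum B (Y :&: Q) i) _ _) _ => [k Y Q kP|k i Y kP Q|].
- by apply: big1 => j _; rewrite B_cross ?mul0r // (negPf kP).
- apply: eq_bigr => j _; have [->|jk] := eqVneq j k.
    by rewrite B_cross ?mul0r // kP andbF.
  by rewrite !in_setI in_setD1 jk.
pose dcol (Q Q' : {set 'I_n}) j := \sum_i ((i \in Q)%:R - (i \in Q')%:R) * B i j.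
have pointwise (Q Q' : {set 'I_n}) :
    fmax (fun Y : {set 'I_n} => \sum_i ((i \in Q)%:R - (i \in Q')%:R) * row_sum B (Y :&: Q) i)
    <= \sum_j (j \in Q)%:R * `|dcol Q Q' j|.
  rewrite (eq_fmax (g := fun Y : {set 'I_n} =>
    \sum_j (j \in Y)%:R * ((j \in Q)%:R * dcol Q Q' j))) => [|Y].
    rewrite fmax_subset_sum; apply: ler_sum => j _; rewrite pos_partMn.
    by rewrite ler_wpM2l ?ler0n ?pos_part_le_norm.
  rewrite /row_sum /dcol; under eq_bigr => i _ do rewrite mulr_sumr.
  rewrite exchange_big; apply: eq_bigr => j _; rewrite !mulr_sumr.
  by apply: eq_bigr => i _; rewrite indicatorI; ring.
apply: le_trans (ler_expect2 p_ge0 p_le1 pointwise) _; rewrite expect2_sum.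
have col_bound j : E2 (fun Q Q' => (j \in Q)%:R * `|dcol Q Q' j|)
    <= p * (p * (\sum_i B i j ^+ 2) / l + l / 2).
  rewrite (_ : E2 _ = p * E2 (fun Q Q' => `|dcol Q Q' j|)).
    by rewrite ler_wpM2l // expect2_norm_le.
  apply: (expect2_indicatorM p_ge0 p_le1) => Q' Q.
  congr `|_|; apply: eq_bigr => i _; have [->|ij] := eqVneq i j.
    by rewrite B_cross ?mulr0 //; case: (j \in P).
  by rewrite in_setD1 ij.
apply: le_trans (ler_sum _ (fun j _ => col_bound j)) _.
rewrite frob_norm_sqr exchange_big /= -mulr_sumr big_split /= sumr_const card_ord.
rewrite -mulr_suml -mulr_sumr -[_ *+ n]mulr_natl.
lra.
Qed.

Lemma expect_cut_max_le l : 0 < l ->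
  E (cut_max B) <= p ^+ 2 * cut_max B setT + 2 * p ^+ 2 * frob_norm B ^+ 2 / l + n%:R * p * l.
Proof.
move=> l0; rewrite (eq_expect (cut_max_rows B)).
have rows Q := fmax_sum_indicator_le Q (fun Y i => row_sum B (Y :&: Q) i) p_ge0.
apply: le_trans (ler_expect p_ge0 p_le1 rows) _; rewrite expectD expectZ.
rewrite (eq_expect (fmax_rows_cols B)).
have cols Q := fmax_sum_indicator_le Q (col_sum B) p_ge0.
apply: le_trans (lerD (ler_wpM2l p_ge0 (ler_expect p_ge0 p_le1 cols))
                      (expect_centered_rows_le l0)) _.
rewrite expectD expectZ expect_const -cut_max_setT.
have := ler_wpM2l p_ge0 (expect_centered_cols_le l0); lra.
Qed.

End Bipartite.
End RandomCutMax.

Section Decoupling.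
Context {R : realType} {n : nat}.
Implicit Types (A B : 'M[R]_n) (P Q X Y : {set 'I_n}).

Definition cross_part A P : 'M[R]_n :=
  \matrix_(i, j) (((i \in P) && (j \notin P))%:R * A i j).

Lemma cross_part_out A P i j : ~~ ((i \in P) && (j \notin P)) -> cross_part A P i j = 0.
Proof. by rewrite mxE => /negPf ->; rewrite mul0r. Qed.

Lemma cut_normN B : cut_norm (- B) = cut_norm B.
Proof.
apply: eq_fmax => I; apply: eq_fmax => J; rewrite -normrN -sumrN; congr `|_|.
by apply: eq_bigr => i _; rewrite -sumrN; apply: eq_bigr => j _; rewrite mxE opprK.
Qed.

Lemma frob_normN B : frob_norm (- B) = frob_norm B.
Proof.
by congr Num.sqrt; apply: eq_bigr => i _; apply: eq_bigr => j _; rewrite mxE sqrrN.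
Qed.

Lemma cut_max_le_cut_norm B Q : cut_max B Q <= cut_norm B.
Proof.
apply: fmax_le => [|X]; first exact: fmax_ge0.
apply: fmax_le => [|Y]; first exact: fmax_ge0.
exact: le_trans (ler_norm _) (norm_cut_sum_le _ _ _).
Qed.

Lemma cut_sum_cross_part A P X Y :
  cut_sum (cross_part A P) X Y = cut_sum A (X :&: P) (Y :\: P).
Proof.
apply: eq_bigr => i _; apply: eq_bigr => j _.
rewrite mxE indicatorI in_setD.
by case: (i \in X); case: (i \in P); case: (j \in P); case: (j \in Y); rewrite /=; ring.
Qed.

Lemma cut_norm_cross_part_le A P : cut_norm (cross_part A P) <= cut_norm A.
Proof.
apply: fmax_le => [|I]; first exact: fmax_ge0.
apply: fmax_le => [|J]; first exact: fmax_ge0.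
by rewrite -cut_sumE cut_sum_cross_part norm_cut_sum_le.
Qed.

Lemma frob_norm_cross_part_le A P : frob_norm (cross_part A P) <= frob_norm A.
Proof.
apply: ler_wsqrtr; apply: ler_sum => i _; apply: ler_sum => j _; rewrite mxE.
by case: (_ && _); rewrite /= ?mul1r ?mul0r ?expr0n ?sqr_ge0.
Qed.

(* Averaging over a uniformly random [P], the entry [(i, j)] survives in
   [cross_part A P] with probability [1/4] if [i != j] and [0] if [i = j]. *)
Lemma cut_sum_decouple A X Y :
  cut_sum A X Y = \sum_i (i \in X)%:R * A i i * (i \in Y)%:R
                  + 4 * binom_subset_expect (1 / 2) (fun P => cut_sum (cross_part A P) X Y).
Proof.
have h0 : (0 : R) <= 1 / 2 by rewrite divr_ge0.
have h1 : (1 / 2 : R) <= 1 by rewrite ler_pdivrMr // mul1r ler1n.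
rewrite /cut_sum expect_sum mulr_sumr -big_split; apply: eq_bigr => i _.
rewrite expect_sum mulr_sumr (bigD1 i) //= [X in _ = _ + X](bigD1 i) //= addrA.
congr (_ + _).
  rewrite (eq_expect (g := fun P => (i \in X)%:R * A i i * (i \in Y)%:R *
    ((i \in P) && (i \notin P))%:R)) => [|P]; last by rewrite mxE; ring.
  by rewrite expectZ (expect_indicator_pair h0 h1) eqxx /=; ring.
apply: eq_bigr => j ji.
rewrite (eq_expect (g := fun P => (i \in X)%:R * A i j * (j \in Y)%:R *
  ((i \in P) && (j \notin P))%:R)) => [|P]; last by rewrite mxE; ring.
by rewrite expectZ (expect_indicator_pair h0 h1) eq_sym ji /=; field.
Qed.

Lemma norm_cut_sum_le_cut_max B Q X Y :
  `|cut_sum B (X :&: Q) (Y :&: Q)| <= cut_max B Q + cut_max (- B) Q.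
Proof.
have le_max (C : 'M[R]_n) : cut_sum C (X :&: Q) (Y :&: Q) <= cut_max C Q.
  exact: le_trans (le_fmax (fun Y => _) Y) (le_fmax (fun X => fmax (fun Y => _)) X).
have := le_max B; have := le_max (- B); rewrite cut_sumN.
have := fmax_ge0 (fun X => fmax (fun Y => cut_sum B (X :&: Q) (Y :&: Q))).
have := fmax_ge0 (fun X => fmax (fun Y => cut_sum (- B) (X :&: Q) (Y :&: Q))).
rewrite /cut_max; case: (lerP 0 (cut_sum B (X :&: Q) (Y :&: Q))) => s0;
  [rewrite ger0_norm // | rewrite ltr0_norm //]; lra.
Qed.

Lemma cut_norm_principal_submx_le A Q :
  cut_norm (principal_submx A Q)
  <= fmax (fun X => fmax (fun Y => `|cut_sum A (X :&: Q) (Y :&: Q)|)).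
Proof.
apply: fmax_le => [|I]; first exact: fmax_ge0.
apply: fmax_le => [|J]; first exact: fmax_ge0.
have sub (S : {set 'I_#|Q|}) : enum_val @: S :&: Q = enum_val @: S.
  by apply/setIidPl/subsetP => x /imsetP [i _ ->]; exact: enum_valP.
apply: le_trans (le_fmax (fun X => fmax (fun Y => _)) (enum_val @: I)).
apply: le_trans (le_fmax (fun Y => _) (enum_val @: J)).
have inj (S : {set 'I_#|Q|}) : {in S &, injective (@enum_val _ (mem Q))}.
  by move=> x y _ _; exact: enum_val_inj.
rewrite !sub cut_sumE big_imset //=.
under [X in _ <= `|X|]eq_bigr => i _ do rewrite big_imset //=.
by under eq_bigr => i _ do under eq_bigr => j _ do rewrite mxE.
Qed.

End Decoupling.

Section PrincipalSubmatrix.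
Context {R : realType} {n : nat}.
Implicit Types (A B : 'M[R]_n) (P Q : {set 'I_n}).

Lemma cut_norm_principal_submx_decouple A Q :
  cut_norm (principal_submx A Q) <= \sum_i (i \in Q)%:R * `|A i i| +
    4 * binom_subset_expect (1 / 2)
          (fun P => cut_max (cross_part A P) Q + cut_max (- cross_part A P) Q).
Proof.
have h0 : (0 : R) <= 1 / 2 by rewrite divr_ge0.
have h1 : (1 / 2 : R) <= 1 by rewrite ler_pdivrMr // mul1r ler1n.
have diag_ge0 : 0 <= \sum_i (i \in Q)%:R * `|A i i|.
  by apply: sumr_ge0 => i _; rewrite mulr_ge0.
have cross_ge0 : 0 <= binom_subset_expect (1 / 2)
    (fun P => cut_max (cross_part A P) Q + cut_max (- cross_part A P) Q).
  by apply: expect_ge0 => // P; rewrite addr_ge0 ?fmax_ge0.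
apply: le_trans (cut_norm_principal_submx_le A Q) _.
apply: fmax_le => [|X]; first by rewrite addr_ge0 ?mulr_ge0.
apply: fmax_le => [|Y]; first by rewrite addr_ge0 ?mulr_ge0.
rewrite cut_sum_decouple; apply: le_trans (ler_normD _ _) _; apply: lerD.
  apply: le_trans (ler_norm_sum _ _ _) _; apply: ler_sum => i _.
  by rewrite !indicatorI; case: (i \in X); case: (i \in Y); case: (i \in Q);
    rewrite /= ?(mul0r, mulr0, mul1r, mulr1) ?normr0.
rewrite normrM ger0_norm // ler_wpM2l //; apply: le_trans (ler_norm_expect h0 h1 _) _.
by apply: ler_expect => // P; exact: norm_cut_sum_le_cut_max.
Qed.

Lemma expect_cut_max_cross_le A B P p l : 0 <= p -> p <= 1 -> 0 < l ->
  (forall i j, ~~ ((i \in P) && (j \notin P)) -> B i j = 0) ->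
  cut_norm B <= cut_norm A -> frob_norm B <= frob_norm A ->
  binom_subset_expect p (cut_max B)
  <= p ^+ 2 * cut_norm A + 2 * p ^+ 2 * frob_norm A ^+ 2 / l + n%:R * p * l.
Proof.
move=> p0 p1 l0 B_cross cutBA frobBA.
apply: le_trans (expect_cut_max_le p0 p1 B_cross l0) _.
rewrite lerD2r lerD ?ler_wpM2l ?exprn_ge0 //.
  exact: le_trans (cut_max_le_cut_norm _ _) cutBA.
rewrite ler_pM2r ?invr_gt0 // ler_wpM2l ?mulr_ge0 ?exprn_ge0 //.
by rewrite ler_sqr ?nnegrE ?sqrtr_ge0.
Qed.

Lemma expect_cut_norm_principal_submx_le A p l : 0 <= p -> p <= 1 -> 0 < l ->
  binom_subset_expect p (fun Q => cut_norm (principal_submx A Q))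
  <= p * \sum_i `|A i i| +
     8 * (p ^+ 2 * cut_norm A + 2 * p ^+ 2 * frob_norm A ^+ 2 / l + n%:R * p * l).
Proof.
move=> p0 p1 l0; set bound := _ + _ + _.
apply: le_trans (ler_expect p0 p1 (cut_norm_principal_submx_decouple A)) _.
rewrite expectD expect_sum expectZ exchange_expect; apply: lerD.
  rewrite mulr_sumr; apply: ler_sum => i _.
  by rewrite (expect_indicatorM p0 p1 (g := fun=> `|A i i|)) ?expect_const.
have -> : 8 * bound = 4 * (bound + bound) by ring.
rewrite ler_wpM2l //.
rewrite -[X in _ <= X](expect_const (n := n) (p := 1 / 2)); apply: ler_expect => [||P].
- by rewrite divr_ge0.
- by rewrite ler_pdivrMr // mul1r ler1n.
rewrite expectD; apply: lerD; apply: (expect_cut_max_cross_le (P := P) p0 p1 l0).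
- exact: cross_part_out.
- exact: cut_norm_cross_part_le.
- exact: frob_norm_cross_part_le.
- by move=> i j ijP; rewrite mxE cross_part_out ?oppr0.
- by rewrite cut_normN cut_norm_cross_part_le.
- by rewrite frob_normN frob_norm_cross_part_le.
Qed.

End PrincipalSubmatrix.

(* With p = q / N and l = eps q, each term of the bound of
   [expect_cut_norm_principal_submx_le] is O(eps q^2), using q eps^2 >= K1. *)
Lemma principal_submx_bound_arith (R : realType) (K1 K2 K3 K4 eps q N C D F : R) :
  0 < K1 -> 0 <= K4 -> 0 < eps -> 0 < N -> K1 * eps ^- 2 <= q ->
  D <= N * (K4 * eps^-1) -> C <= K2 * eps * N ^+ 2 -> 0 <= F -> F <= K3 * N ->
  q / N * D + 8 * ((q / N) ^+ 2 * C + 2 * (q / N) ^+ 2 * F ^+ 2 / (eps * q)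
                   + N * (q / N) * (eps * q))
  <= (K4 / K1 + 8 * K2 + 16 * (K3 ^+ 2 / K1) + 8) * eps * q ^+ 2.
Proof.
move=> K1_gt0 K4_ge0 eps_gt0 N_gt0 q_ge D_le C_le F_ge0 F_le.
have q_gt0 : 0 < q by apply: lt_le_trans q_ge; rewrite mulr_gt0 ?invr_gt0 ?exprn_gt0.
have p_ge0 : 0 <= q / N by rewrite divr_ge0 ?ltW.
set v := eps * q ^+ 2.
have small : q / eps <= v / K1.
  have qe : K1 <= q * eps ^+ 2 by rewrite -ler_pdivrMr ?exprn_gt0.
  rewrite -subr_ge0 (_ : _ - _ = q / (eps * K1) * (q * eps ^+ 2 - K1)).
    by apply: mulr_ge0; rewrite ?subr_ge0 // divr_ge0 ?mulr_ge0 // ltW.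
  by rewrite /v; field; rewrite !gt_eqF.
have T0 : q / N * D <= K4 / K1 * v.
  apply: le_trans (ler_wpM2l p_ge0 D_le) _.
  have -> : q / N * (N * (K4 * eps^-1)) = K4 * (q / eps) by field; rewrite !gt_eqF.
  by rewrite -mulrA [_ * v]mulrC ler_wpM2l.
have T1 : (q / N) ^+ 2 * C <= K2 * v.
  apply: le_trans (ler_wpM2l (exprn_ge0 2 p_ge0) C_le) _.
  have -> : (q / N) ^+ 2 * (K2 * eps * N ^+ 2) = K2 * v by rewrite /v; field; rewrite !gt_eqF.
  exact: lexx.
have T2 : 2 * (q / N) ^+ 2 * F ^+ 2 / (eps * q) <= 2 * (K3 ^+ 2 / K1) * v.
  have F2 : F ^+ 2 <= (K3 * N) ^+ 2 by rewrite lerXn2r ?nnegrE ?(le_trans F_ge0).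
  apply: le_trans (_ : _ <= 2 * (q / N) ^+ 2 * (K3 * N) ^+ 2 / (eps * q)) _.
    apply: ler_wpM2r; first by rewrite invr_ge0 mulr_ge0 ?ltW.
    by apply: ler_wpM2l F2; rewrite mulr_ge0 ?exprn_ge0.
  have -> : 2 * (q / N) ^+ 2 * (K3 * N) ^+ 2 / (eps * q) = 2 * K3 ^+ 2 * (q / eps).
    by field; rewrite !gt_eqF.
  have -> : 2 * (K3 ^+ 2 / K1) * v = 2 * K3 ^+ 2 * (v / K1) by ring.
  by apply: ler_wpM2l small; rewrite mulr_ge0 ?sqr_ge0.
have -> : N * (q / N) * (eps * q) = v by rewrite /v; field; rewrite !gt_eqF.
have -> : (K4 / K1 + 8 * K2 + 16 * (K3 ^+ 2 / K1) + 8) * eps * q ^+ 2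
          = K4 / K1 * v + 8 * (K2 * v + 2 * (K3 ^+ 2 / K1) * v + v) by rewrite /v; ring.
lra.
Qed.

Unset Implicit Arguments.

Theorem corollary1p3 (R : realType) (K1 K2 K3 K4 : R) :
  0 < K1 -> 0 < K2 -> 0 < K3 -> 0 < K4 ->
  exists K : R, 0 < K /\
    forall (n : nat) (eps : R) (A : 'M[R]_n) (q : R),
      0 < eps -> eps <= 1 ->
      K1 * eps ^- 2 <= q -> q <= n%:R ->
      cut_norm A <= K2 * eps * n%:R ^+ 2 ->
      frob_norm A <= K3 * n%:R ->
      (forall i j, `|A i j| <= K4 * eps^-1) ->
      binom_subset_expect (q / n%:R) (fun Q => cut_norm (principal_submx A Q))
        <= K * eps * q ^+ 2.
Proof.
move=> K1_gt0 K2_gt0 K3_gt0 K4_gt0.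
exists (K4 / K1 + 8 * K2 + 16 * (K3 ^+ 2 / K1) + 8); split.
  by have := divr_gt0 K4_gt0 K1_gt0; have := divr_gt0 (exprn_gt0 2 K3_gt0) K1_gt0; lra.
move=> n eps A q eps_gt0 eps_le1 q_ge q_le cutA frobA entryA.
have q_gt0 : 0 < q by apply: lt_le_trans q_ge; rewrite mulr_gt0 ?invr_gt0 ?exprn_gt0.
have n_gt0 : 0 < n%:R :> R := lt_le_trans q_gt0 q_le.
have p_ge0 : 0 <= q / n%:R by rewrite divr_ge0 ?ltW.
have p_le1 : q / n%:R <= 1 by rewrite ler_pdivrMr // mul1r.
have l_gt0 : 0 < eps * q by rewrite mulr_gt0.
apply: le_trans (expect_cut_norm_principal_submx_le A p_ge0 p_le1 l_gt0) _.
apply: principal_submx_bound_arith; rewrite ?sqrtr_ge0 ?(ltW K4_gt0) //.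
apply: le_trans (ler_sum _ (fun i _ => entryA i i)) _.
by rewrite sumr_const card_ord mulr_natl.
Qed.
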